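(* Let $x_1,x_2,x_3>0$, $\gamma,\delta>0$ with $\gamma\ne1\ne\delta$, and let $$\mathbf{Q}=\begin{pmatrix}1&\delta x_1&x_2&x_3\\ 1/(\delta x_1)&1&x_2/x_1&x_3/x_1\\ 1/x_2&x_1/x_2&1&\gamma x_3/x_2\\ 1/x_3&x_1/x_3&x_2/(\gamma x_3)&1\end{pmatrix}$$ with principal right eigenvector $\mathbf{w}^{EM}$. If $\delta>1$ and $\gamma<1$, then $w_1^{EM}/w_3^{EM}>x_2$.
   Context: The principal right eigenvector is the positive (Perron) eigenvector belonging to the largest eigenvalue. *)

From HB Require Import structures.
From mathcomp Require Import all_boot all_order all_algebra.
From mathcomp Require Import all_reals.
Set Implicit Arguments. Unset Strict Implicit. Unset Printing Implicit Defensive.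
Import Order.TTheory GRing.Theory Num.Theory.
Local Open Scope ring_scope.

(* The 4x4 matrix Q of the paper (indices 0..3 correspond to 1..4). *)
Definition Qmx (R : realType) (x1 x2 x3 gamma delta : R) : 'M[R]_4 :=
  \matrix_(i < 4, j < 4)
    match nat_of_ord i, nat_of_ord j with
    | 0, 0 => 1 | 0, 1 => delta * x1 | 0, 2 => x2 | 0, _ => x3
    | 1, 0 => (delta * x1)^-1 | 1, 1 => 1 | 1, 2 => x2 / x1 | 1, _ => x3 / x1
    | 2, 0 => x2^-1 | 2, 1 => x1 / x2 | 2, 2 => 1 | 2, _ => gamma * x3 / x2
    | _, 0 => x3^-1 | _, 1 => x1 / x3 | _, 2 => x2 / (gamma * x3) | _, _ => 1
    end.

Definition principal_right_eigenvector (R : realType) (n : nat)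
    (A : 'M[R]_n) (w : 'cV[R]_n) : Prop :=
  (forall i, 0 < w i 0) /\
  exists lambda : R, A *m w = lambda *: w /\
    eigenvalue A lambda /\ (forall mu : R, eigenvalue A mu -> mu <= lambda).

From mathcomp Require Import all_boot all_order all_algebra.
From mathcomp Require Import all_reals.
From mathcomp Require Import ring.
Set Implicit Arguments. Unset Strict Implicit. Unset Printing Implicit Defensive.
Import Order.TTheory GRing.Theory Num.Theory.
Local Open Scope ring_scope.

(* Subtracting [x2] times the third eigen-equation from the first cancels
   every term except [(delta - 1) x1 w2] and [(1 - gamma) x3 w4], so
   [lambda (w1 - x2 w3)] is positive; and the eigenvalue of a positive
   matrix with a positive eigenvector is positive. *)

Lemma eigenvalue_gt0_of_pos (R : numFieldType) (n : nat) (A : 'M[R]_n.+1)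
    (w : 'cV[R]_n.+1) (lambda : R) :
  (forall i j, 0 < A i j) -> (forall i, 0 < w i 0) ->
  A *m w = lambda *: w -> 0 < lambda.
Proof.
move=> Apos wpos eig.
have row0 := congr1 (fun M : 'cV[R]_n.+1 => M ord0 0) eig.
rewrite /= !mxE in row0.
have sum_gt0 : 0 < \sum_j A ord0 j * w j 0.
  by rewrite big_ord_recl ltr_pwDl ?mulr_gt0 // sumr_ge0 // => j _;
     rewrite mulr_ge0 // ltW.
by rewrite -(pmulr_lgt0 _ (wpos ord0)) -row0.
Qed.

Lemma big_ord4 (V : nmodType) (F : 'I_4 -> V) :
  \sum_(j < 4) F j = F (@Ordinal 4 0 isT) + F (@Ordinal 4 1 isT)
                     + F (@Ordinal 4 2 isT) + F (@Ordinal 4 3 isT).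
Proof.
rewrite !big_ord_recl big_ord0 addr0 !addrA.
by congr (_ + _ + _ + _); congr F; apply: val_inj.
Qed.

Section EMMatrix.

Variables (R : realType) (x1 x2 x3 gamma delta : R).
Hypotheses (x1_gt0 : 0 < x1) (x2_gt0 : 0 < x2) (x3_gt0 : 0 < x3)
  (gamma_gt0 : 0 < gamma) (delta_gt0 : 0 < delta).

Local Notation Q := (Qmx x1 x2 x3 gamma delta).

Lemma Qmx_gt0 i j : 0 < Q i j.
Proof.
rewrite mxE.
by case: i => [[|[|[|[|?]]]] ?]; case: j => [[|[|[|[|?]]]] ?] //=;
   rewrite ?invr_gt0 ?divr_gt0 ?mulr_gt0.
Qed.

Variables (w : 'cV[R]_4) (lambda : R).
Hypothesis eig : Q *m w = lambda *: w.

Local Notation w_ k := (w (@Ordinal 4 k isT) 0).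

Lemma Qmx_eigen_row0 :
  lambda * w_ 0 = w_ 0 + delta * x1 * w_ 1 + x2 * w_ 2 + x3 * w_ 3.
Proof.
have := congr1 (fun M : 'cV[R]_4 => M (@Ordinal 4 0 isT) 0) eig.
by rewrite !mxE big_ord4 !mxE /= mul1r => <-.
Qed.

Lemma Qmx_eigen_row2 :
  x2 * (lambda * w_ 2) = w_ 0 + x1 * w_ 1 + x2 * w_ 2 + gamma * x3 * w_ 3.
Proof.
have := congr1 (fun M : 'cV[R]_4 => M (@Ordinal 4 2 isT) 0) eig.
rewrite !mxE big_ord4 !mxE /= => <-.
by field; rewrite gt_eqF.
Qed.

Lemma Qmx_eigen_row0_sub_row2 :
  lambda * (w_ 0 - x2 * w_ 2) = (delta - 1) * x1 * w_ 1 + (1 - gamma) * x3 * w_ 3.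
Proof. by rewrite mulrBr mulrCA Qmx_eigen_row0 Qmx_eigen_row2; ring. Qed.

End EMMatrix.

Theorem mainTheorem12 (R : realType) (x1 x2 x3 gamma delta : R)
  (w : 'cV[R]_4) :
  0 < x1 -> 0 < x2 -> 0 < x3 -> 0 < gamma -> 0 < delta ->
  gamma != 1 -> delta != 1 ->
  principal_right_eigenvector (Qmx x1 x2 x3 gamma delta) w ->
  1 < delta -> gamma < 1 ->
  w (@Ordinal 4 0 isT) 0 / w (@Ordinal 4 2 isT) 0 > x2.
Proof.
move=> x1_gt0 x2_gt0 x3_gt0 gamma_gt0 delta_gt0 _ _ [w_gt0 [lambda [eig _]]].
move=> delta_gt1 gamma_lt1.
have Q_gt0 := Qmx_gt0 x1_gt0 x2_gt0 x3_gt0 gamma_gt0 delta_gt0.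
have lambda_gt0 : 0 < lambda := eigenvalue_gt0_of_pos Q_gt0 w_gt0 eig.
have : 0 < lambda * (w (@Ordinal 4 0 isT) 0 - x2 * w (@Ordinal 4 2 isT) 0).
  rewrite (Qmx_eigen_row0_sub_row2 x2_gt0 eig).
  have delta1_gt0 : 0 < delta - 1 by rewrite subr_gt0.
  have gamma1_gt0 : 0 < 1 - gamma by rewrite subr_gt0.
  by rewrite addr_gt0 // !mulr_gt0.
by rewrite pmulr_rgt0 // subr_gt0 ltr_pdivlMr.
Qed.
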